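(* Let $\mathcal{C}$ be an idempotent Mal'cev clone on $\{0,1,2\}$ that contains a majority operation and preserves none of $\mu_0,\mu_1,\mu_2$ and $\varphi$. Then $\mathcal{C}\equiv_{\mathrm{m}}\mathcal{C}_2$ or $\mathcal{C}\equiv_{\mathrm{m}}\mathcal{I}_2$.
   Context: A clone is idempotent if $f(x,\dots,x)\approx x$ for all its operations; Mal'cev if it contains $d$ with $d(y,x,x)\approx d(x,x,y)\approx y$; a majority operation satisfies $m(x,y,y)\approx m(y,x,y)\approx m(y,y,x)\approx y$. $\mu_i$ is the equivalence relation on $\{0,1,2\}$ with classes $\{i\}$ and $\{0,1,2\}\setminus\{i\}$; $\varphi=\{(0,1),(1,2),(2,0)\}$. $\mathcal{C}_2=\mathrm{Pol}(\{0,1\};\neq,\{0\},\{1\})$ and $\mathcal{I}_2=\mathrm{Pol}(\{0,1\};\{0\},\{1\})$, where $\mathrm{Pol}(\Gamma)$ is the clone of operations preserving all relations of $\Gamma$. For an $n$-ary $f$ and $\sigma\colon[n]\to[r]$, $f_\sigma(x_1,\dots,x_r)=f(x_{\sigma(1)},\dots,x_{\sigma(n)})$; a minion homomorphism is an arity-preserving map $\xi$ between clones with $\xi(f_\sigma)=\xi(f)_\sigma$; $\mathcal{C}\equiv_{\mathrm{m}}\mathcal{D}$ means there are minion homomorphisms in both directions. *)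

From mathcomp Require Import all_boot.
Set Implicit Arguments. Unset Strict Implicit. Unset Printing Implicit Defensive.

Definition op (T : finType) (n : nat) := {ffun {ffun 'I_n -> T} -> T}.

Definition opset (T : finType) := forall n : nat, op T n -> Prop.

Definition proj_op (T : finType) (n : nat) (i : 'I_n) : op T n :=
  [ffun x : {ffun 'I_n -> T} => x i].
Definition comp_op (T : finType) (n m : nat) (f : op T n) (g : 'I_n -> op T m)
  : op T m := [ffun x : {ffun 'I_m -> T} => f [ffun i => g i x]].

Definition is_clone (T : finType) (C : opset T) : Prop :=
  (forall n (i : 'I_n), C n (proj_op T i)) /\
  (forall n m (f : op T n) (g : 'I_n -> op T m),
      C n f -> (forall i, C m (g i)) -> C m (comp_op f g)).

Definition minor (T : finType) (n r : nat) (sigma : 'I_n -> 'I_r) (f : op T n)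
  : op T r := [ffun x : {ffun 'I_r -> T} => f [ffun i => x (sigma i)]].

Definition minion_hom (T U : finType) (C : opset T) (D : opset U)
  (xi : forall n, op T n -> op U n) : Prop :=
  (forall n f, C n f -> D n (xi n f)) /\
  (forall n r (sigma : 'I_n -> 'I_r) (f : op T n),
      C n f -> xi r (minor sigma f) = minor sigma (xi n f)).

Definition minion_equiv (T U : finType) (C : opset T) (D : opset U) : Prop :=
  (exists xi, minion_hom C D xi) /\ (exists zeta, minion_hom D C zeta).

Definition relk (T : finType) (k : nat) := pred {ffun 'I_k -> T}.

Definition preserves (T : finType) (n k : nat) (f : op T n) (R : relk T k) : Prop :=
  forall r : 'I_n -> {ffun 'I_k -> T},
    (forall j, R (r j)) -> R [ffun l : 'I_k => f [ffun j => r j l]].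

Fixpoint Pol (T : finType) (Gamma : list {k : nat & relk T k}) : opset T :=
  fun n f => match Gamma with
             | nil => True
             | cons (existT k R) G => preserves f R /\ Pol G f
             end.

Definition rel1 (T : finType) (P : pred T) : relk T 1 :=
  fun t => P (t ord0).
Definition rel2 (T : finType) (R : rel T) : relk T 2 :=
  fun t => R (t ord0) (t ord_max).

Definition tri (T : finType) (a b c : T) : {ffun 'I_3 -> T} :=
  [ffun i : 'I_3 => if val i == 0 then a else if val i == 1 then b else c].

Definition idempotent_clone (T : finType) (C : opset T) : Prop :=
  forall n (f : op T n), C n f -> forall x : T, f [ffun _ => x] = x.

Definition has_malcev (T : finType) (C : opset T) : Prop :=
  exists d : op T 3, C 3 d /\
    forall x y : T, d (tri y x x) = y /\ d (tri x x y) = y.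

Definition has_majority (T : finType) (C : opset T) : Prop :=
  exists m : op T 3, C 3 m /\
    forall x y : T, [/\ m (tri x y y) = y, m (tri y x y) = y & m (tri y y x) = y].

Definition clone_preserves (T : finType) (C : opset T) (k : nat) (R : relk T k) : Prop :=
  forall n (f : op T n), C n f -> preserves f R.

Definition mu (i : nat) : relk 'I_3 2 :=
  rel2 (fun x y : 'I_3 => (val x == i) == (val y == i)).
Definition phi : relk 'I_3 2 :=
  rel2 (fun x y : 'I_3 => val y == (val x).+1 %% 3).

Definition neq2 : relk 'I_2 2 := rel2 (fun x y : 'I_2 => x != y).
Definition const2 (c : nat) : relk 'I_2 1 := rel1 (fun x : 'I_2 => val x == c).

Definition C2 : opset 'I_2 :=
  Pol [:: existT _ 2 neq2; existT _ 1 (const2 0); existT _ 1 (const2 1)].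
Definition I2 : opset 'I_2 :=
  Pol [:: existT _ 1 (const2 0); existT _ 1 (const2 1)].

From mathcomp Require Import all_boot boolp.
Set Implicit Arguments. Unset Strict Implicit. Unset Printing Implicit Defensive.

(* By the Baker-Pixley theorem the majority operation makes [C]
   the clone of all operations preserving its invariant binary relations, and
   the Mal'cev operation makes these relations rectangular. As no [mu t] and no
   [phi] is invariant, each invariant binary relation is then a product of
   unary ones, the graph of the identity or of a transposition, or a bijection
   between two-element subsets.
   Restricting the operations of [C] to two values [p], [q] is a minion
   homomorphism to [I2], and to [C2] when the swap of [p] and [q] is invariant.
   Conversely, a Boolean operation [h] is lifted to {0,1,2} by coding each
   element as a Boolean vector, applying [h] coordinatewise and decoding. On
   tuples with two values [p], [q] the lift returns [p] or [q], unless [h] acts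
   there as a meet or a join (never the case for self-dual [h]), when it
   returns a chosen value [L r] for the third element [r]. The lift preserves
   all invariant binary relations provided [L] respects the invariant
   transpositions and bijections; without invariant swaps such an [L] is
   obtained by transport along the invariant bijections, which are then unique. *)

Definition idem_op (T : finType) n (f : op T n) : Prop := forall a, f [ffun _ => a] = a.

(** * Binary relations and invariance *)

Section Relations.
Variable T : finType.

Definition rel_conv (R : rel T) : rel T := fun a b => R b a.
Definition rel_comp (R S : rel T) : rel T := fun a c => [exists b, R a b && S b c].
Definition rel_dom (R : rel T) : pred T := fun a => [exists b, R a b].
Definition rel_codom (R : rel T) : pred T := rel_dom (rel_conv R).
Definition rel_link (R : rel T) : rel T := rel_comp R (rel_conv R).

Definition rel_inj (R : rel T) : Prop := forall a a' b, R a b -> R a' b -> a = a'.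

Definition rectangular (R : rel T) : Prop :=
  forall a b c e, R a c -> R b c -> R b e -> R a e.

Definition left_linked (R : rel T) : Prop :=
  forall a a', rel_dom R a -> rel_dom R a' -> rel_link R a a'.

Lemma rel_link_sym R a a' : rel_link R a a' -> rel_link R a' a.
Proof.
case/existsP=> b /andP[Rab Ra'b]; apply/existsP; exists b.
by rewrite /rel_conv in Ra'b *; rewrite Rab Ra'b.
Qed.

Lemma rel_link_refl R a : rel_dom R a -> rel_link R a a.
Proof. by case/existsP=> b Rab; apply/existsP; exists b; rewrite /rel_conv Rab. Qed.

Lemma rel_link_trans R : rectangular R ->
  forall a a' a'', rel_link R a a' -> rel_link R a' a'' -> rel_link R a a''.
Proof.
move=> rectR a a' a'' /existsP[b /andP[Rab Ra'b]] /existsP[b' /andP[Ra'b' Ra''b']].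
apply/existsP; exists b'; rewrite /rel_conv in Ra'b Ra''b' *.
by rewrite Ra''b' (rectR _ _ _ _ Rab Ra'b Ra'b').
Qed.

Lemma not_left_linked R : ~ left_linked R ->
  exists a1 a2, [/\ a1 != a2, rel_dom R a1 & rel_dom R a2].
Proof.
move=> not_linked; apply: contra_notP not_linked => no_pair a1 a2 dom1 dom2.
case: (eqVneq a1 a2) => [<-|neq_a]; first exact: rel_link_refl.
by case: no_pair; exists a1, a2.
Qed.

End Relations.

Section InvariantRelations.
Variables (T : finType) (C : opset T).
Arguments C : clear implicits.

Definition pres_rel n (f : op T n) (R : rel T) : Prop :=
  forall x y : {ffun 'I_n -> T}, (forall i, R (x i) (y i)) -> R (f x) (f y).
Definition pres_pred n (f : op T n) (U : pred T) : Prop :=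
  forall x : {ffun 'I_n -> T}, (forall i, U (x i)) -> U (f x).

Definition inv_rel (R : rel T) : Prop := forall n (f : op T n), C n f -> pres_rel f R.
Definition inv_pred (U : pred T) : Prop := forall n (f : op T n), C n f -> pres_pred f U.

Lemma inv_rel_ext R R' : inv_rel R -> R =2 R' -> inv_rel R'.
Proof.
by move=> invR eqR n f Cf x y Rxy; rewrite -eqR; apply: invR => // i; rewrite eqR.
Qed.

Lemma inv_pred_ext U U' : inv_pred U -> U =1 U' -> inv_pred U'.
Proof.
by move=> invU eqU n f Cf x Ux; rewrite -eqU; apply: invU => // i; rewrite eqU.
Qed.

Lemma inv_rel_conv R : inv_rel R -> inv_rel (rel_conv R).
Proof. by move=> invR n f Cf x y Rxy; apply: invR. Qed.

Lemma inv_rel_comp R S : inv_rel R -> inv_rel S -> inv_rel (rel_comp R S).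
Proof.
move=> invR invS n f Cf x z /(_ _)/existsP RSxz.
pose y := [ffun i => odflt (x i) [pick b | R (x i) b && S b (z i)]].
have RSy i : R (x i) (y i) && S (y i) (z i).
  by rewrite ffunE; case: pickP => [//|noy]; case: (RSxz i) => b; rewrite noy.
apply/existsP; exists (f y); apply/andP.
by split; [apply: invR | apply: invS] => // i; case/andP: (RSy i).
Qed.

Lemma inv_rel_diag U : inv_pred U -> inv_rel [rel a b | (a == b) && U a].
Proof.
move=> invU n f Cf x y /= xy.
have -> : y = x by apply/ffunP => i; case/andP: (xy i) => /eqP.
by rewrite eqxx; apply: invU => // i; case/andP: (xy i).
Qed.

Lemma inv_pred_dom R : inv_rel R -> inv_pred (rel_dom R).
Proof.
move=> invR n f Cf x /(_ _)/existsP Rx.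
pose y := [ffun i => odflt (x i) [pick b | R (x i) b]].
have Ry i : R (x i) (y i).
  by rewrite ffunE; case: pickP => [//|noy]; case: (Rx i) => b; rewrite noy.
by apply/existsP; exists (f y); apply: invR.
Qed.

Lemma inv_pred_codom R : inv_rel R -> inv_pred (rel_codom R).
Proof. by move/inv_rel_conv/inv_pred_dom. Qed.

Lemma inv_rel_clone_preserves R : inv_rel R -> clone_preserves C (rel2 R).
Proof.
move=> invR n f Cf r Rr; rewrite /rel2 !ffunE.
by apply: invR => // i; rewrite !ffunE; apply: Rr.
Qed.

Lemma inv_rel_rect (d : op T 3) : C 3 d ->
  (forall x y, d (tri y x x) = y /\ d (tri x x y) = y) ->
  forall R, inv_rel R -> rectangular R.
Proof.
move=> Cd malcev_d R invR a b c e Rac Rbc Rbe.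
rewrite -(malcev_d b a).1 -(malcev_d c e).2; apply: invR => // i.
by rewrite !ffunE; case: i => -[|[|[|i]]].
Qed.

End InvariantRelations.

(** * The Baker-Pixley theorem *)

Section BakerPixley.
Variables (T : finType) (C : opset T).
Arguments C : clear implicits.
Hypothesis cloneC : is_clone C.
Variable m : op T 3.
Hypothesis Cm : C 3 m.
Hypothesis majority_m : forall x y : T,
  [/\ m (tri x y y) = y, m (tri y x y) = y & m (tri y y x) = y].

Definition majority_comp n (g1 g2 g3 : op T n) : op T n :=
  comp_op m (fun i : 'I_3 => if val i == 0 then g1 else if val i == 1 then g2 else g3).

Lemma majority_comp_in n (g1 g2 g3 : op T n) :
  C n g1 -> C n g2 -> C n g3 -> C n (majority_comp g1 g2 g3).
Proof. by move=> C1 C2 C3; apply: cloneC.2 => // -[[|[|[|i]]] ?]. Qed.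

Lemma majority_comp_agree n (F g1 g2 g3 : op T n) z :
  [\/ g2 z = F z /\ g3 z = F z, g1 z = F z /\ g3 z = F z | g1 z = F z /\ g2 z = F z] ->
  majority_comp g1 g2 g3 z = F z.
Proof.
have -> : majority_comp g1 g2 g3 z = m (tri (g1 z) (g2 z) (g3 z)).
  by rewrite ffunE; congr (m _); apply/ffunP => -[[|[|[|i]]] ?]; rewrite !ffunE.
case=> -[-> ->].
- by case: (majority_m (g1 z) (F z)).
- by case: (majority_m (g2 z) (F z)).
- by case: (majority_m (g3 z) (F z)).
Qed.

Lemma majority_interpolation n (F : op T n) :
  (forall x y, exists2 g, C n g & g x = F x /\ g y = F y) ->
  forall s : seq {ffun 'I_n -> T}, exists2 g, C n g & {in s, g =1 F}.
Proof.
move=> interp2.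
have [g0 Cg0] : exists g, C n g.
  case: n F interp2 => [|n'] F interp2; last by exists (proj_op T ord0); apply: cloneC.1.
  by have [g Cg _] := interp2 (ffun0 (card_ord 0)) (ffun0 (card_ord 0)); exists g.
move=> s; have [k] := ubnP (size s); elim: k s => // k IHk.
case=> [|a [|b [|c t]]] /= size_s.
- by exists g0.
- by have [g Cg [ga _]] := interp2 a a; exists g => // z; rewrite inE => /eqP ->.
- by have [g Cg [ga gb]] := interp2 a b; exists g => // z; rewrite !inE => /orP[] /eqP ->.
(* Each point of [a :: b :: c :: t] is missed by at most one of [g1], [g2],
   [g3], so their majority combination interpolates on all of them. *)
have [g1 C1 g1F] := IHk [:: b, c & t] size_s.
have [g2 C2 g2F] := IHk [:: a, c & t] size_s.
have [g3 C3 g3F] := IHk [:: a, b & t] size_s.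
exists (majority_comp g1 g2 g3); first exact: majority_comp_in.
move=> z; rewrite !inE => /or4P[] z_s; apply: majority_comp_agree.
- by constructor 1; split; [apply: g2F | apply: g3F]; rewrite inE z_s.
- by constructor 2; split; [apply: g1F | apply: g3F]; rewrite !inE z_s ?orbT.
- by constructor 3; split; [apply: g1F | apply: g2F]; rewrite !inE z_s ?orbT.
- by constructor 1; split; [apply: g2F | apply: g3F]; rewrite !inE z_s ?orbT.
Qed.

Definition generated_rel n (x y : {ffun 'I_n -> T}) : rel T :=
  fun a b => `[< exists2 g, C n g & g x = a /\ g y = b >].

Lemma inv_generated_rel n (x y : {ffun 'I_n -> T}) : inv_rel C (generated_rel x y).
Proof.
move=> k f Cf u w /(_ _)/asboolP uw.
pose G j := s2val (cid2 (uw j)).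
have [CG GE] : (forall j, C n (G j)) /\ (forall j, G j x = u j /\ G j y = w j).
  by split=> j; rewrite /G; case: (cid2 _).
apply/asboolP; exists (comp_op f G); first exact: cloneC.2.
by rewrite !ffunE; split; congr (f _); apply/ffunP => j; rewrite ffunE; case: (GE j).
Qed.

Theorem baker_pixley n (F : op T n) :
  (forall R, inv_rel C R -> pres_rel F R) -> C n F.
Proof.
move=> F_inv.
have interp2 (x y : {ffun 'I_n -> T}) : exists2 g, C n g & g x = F x /\ g y = F y.
  suff /asboolP : generated_rel x y (F x) (F y) by [].
  apply: F_inv (@inv_generated_rel n x y) _ _ _ => i.
  by apply/asboolP; exists (proj_op T i); [exact: cloneC.1 | rewrite !ffunE].
have [g Cg gF] := majority_interpolation interp2 (enum {: {ffun 'I_n -> T}}).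
suff -> : F = g by [].
by apply/ffunP => z; rewrite gF // mem_enum.
Qed.

End BakerPixley.

Notation A := 'I_3.
Notation B := 'I_2.

Definition o0 : A := @Ordinal 3 0 isT.
Definition o1 : A := @Ordinal 3 1 isT.
Definition o2 : A := @Ordinal 3 2 isT.

Lemma A_cases (a : A) : [\/ a = o0, a = o1 | a = o2].
Proof.
case: a => -[|[|[|m]]] lt_m //; [constructor 1|constructor 2|constructor 3]; exact: val_inj.
Qed.

Lemma forall3 (P : A -> Prop) : P o0 -> P o1 -> P o2 -> forall a, P a.
Proof. by move=> P0 P1 P2 a; case: (A_cases a) => ->. Qed.

Definition third (p q : A) : A :=
  if (p != o0) && (q != o0) then o0 else if (p != o1) && (q != o1) then o1 else o2.

Lemma third_neq p q : p != q -> (third p q != p) && (third p q != q).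
Proof. by move: p q; apply: forall3; apply: forall3. Qed.

Lemma third_cases p q : p != q -> forall z, [|| z == p, z == q | z == third p q].
Proof. by move: p q; apply: forall3; apply: forall3 => // _; apply: forall3. Qed.

Lemma third_predC1 p q z : p != q -> (z != third p q) = (z == p) || (z == q).
Proof. by move: p q z; do 3!apply: forall3. Qed.

Lemma third_uniq p q z : p != q -> z != p -> z != q -> z = third p q.
Proof.
move=> neq_pq /negbTE zp /negbTE zq.
by case/or3P: (third_cases neq_pq z); rewrite ?zp ?zq // => /eqP.
Qed.

Lemma third_onto r : exists p q, p != q /\ r = third p q.
Proof. by move: r; apply: forall3; [exists o1, o2 | exists o0, o2 | exists o0, o1]. Qed.

Definition other (z : A) : A := if z == o0 then o1 else o0.

Lemma other_neq z : other z != z.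
Proof. by move: z; apply: forall3. Qed.

Definition tau (s a : A) : A := if a == s then a else third s a.

Lemma tau_id s : tau s s = s.
Proof. by rewrite /tau eqxx. Qed.

Lemma tau_inv s : involutive (tau s).
Proof. by move=> a; move: s a; apply: forall3; apply: forall3. Qed.

Lemma tau_inj s : injective (tau s).
Proof. exact: inv_inj (tau_inv s). Qed.

Lemma tau_eq s a b : (tau s a == b) = (a == tau s b).
Proof. by apply/eqP/eqP => [<-|->]; rewrite tau_inv. Qed.

Lemma tau_comp_no_fixpoint s s' a : s != s' -> tau s' (tau s a) != a.
Proof. by move: s s' a; do 3!apply: forall3. Qed.

Definition cyc (z : A) : A := if z == o0 then o1 else if z == o1 then o2 else o0.

Lemma perm3_cases (g : A -> A) : injective g ->
  [\/ g =1 id, exists s, g =1 tau s, g =1 cyc | g =1 cyc \o cyc].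
Proof.
move=> g_inj.
case: (A_cases (g o0)) => g0; case: (A_cases (g o1)) => g1; case: (A_cases (g o2)) => g2;
first [ by have := @g_inj o0 o1; rewrite g0 g1 => /(_ erefl)
      | by have := @g_inj o0 o2; rewrite g0 g2 => /(_ erefl)
      | by have := @g_inj o1 o2; rewrite g1 g2 => /(_ erefl)
      | by constructor 1; apply: forall3; rewrite /= ?g0 ?g1 ?g2
      | by constructor 2; exists o0; apply: forall3; rewrite ?g0 ?g1 ?g2
      | by constructor 2; exists o1; apply: forall3; rewrite ?g0 ?g1 ?g2
      | by constructor 2; exists o2; apply: forall3; rewrite ?g0 ?g1 ?g2
      | by constructor 3; apply: forall3; rewrite ?g0 ?g1 ?g2
      | by constructor 4; apply: forall3; rewrite ?g0 ?g1 ?g2 ].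
Qed.

(** * Lifting Boolean operations *)

Definition z2 : B := @Ordinal 2 0 isT.
Definition u2 : B := @Ordinal 2 1 isT.
Definition b2o (b : bool) : B := if b then u2 else z2.

Lemma B_cases (b : B) : b = z2 \/ b = u2.
Proof. by case: b => -[|[|m]] lt_m //; [left|right]; apply: val_inj. Qed.

(* Elements of [A] are coded by Boolean vectors indexed by [A * A]: the code of
   [a] marks the pairs containing [a]. [code_meet r] and [code_join r] are the
   pointwise meet and join of the codes of the two elements other than [r]. *)
Definition code (a : A) : {ffun A * A -> B} :=
  [ffun ij => b2o ((ij.1 == a) || (ij.2 == a))].
Definition code_meet (r : A) : {ffun A * A -> B} :=
  [ffun ij => b2o [&& ij.1 != ij.2, ij.1 != r & ij.2 != r]].
Definition code_join (r : A) : {ffun A * A -> B} :=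
  [ffun ij => b2o (~~ ((ij.1 == r) && (ij.2 == r)))].

Lemma code_inj : injective code.
Proof. by move=> a a' /ffunP/(_ (a, a)); rewrite !ffunE /= eqxx orbb; case: eqP. Qed.

Lemma code_neq_meet a r : code a <> code_meet r.
Proof. by move/ffunP/(_ (a, a)); rewrite !ffunE /= eqxx. Qed.

Lemma code_neq_join a r : code a <> code_join r.
Proof.
move/ffunP=> eq_aj; have := eq_aj (r, r); rewrite !ffunE /= eqxx /= orbb.
case: eqP => // /eqP neq_ra _; have /andP[ta tr] := third_neq neq_ra.
by have := eq_aj (third r a, third r a); rewrite !ffunE /= orbb andbb (negbTE ta) (negbTE tr).
Qed.

Lemma meet_neq_join r r' : code_meet r <> code_join r'.
Proof.
move/ffunP/(_ (other r', other r')).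
by rewrite !ffunE /= eqxx /= andbb (negbTE (other_neq r')).
Qed.

Lemma code_meet_inj : injective code_meet.
Proof.
move=> r r'; case: (eqVneq r r') => // neq_r /ffunP/(_ (r, third r r')).
have /andP[tr tr'] := third_neq neq_r.
by rewrite !ffunE /= eqxx eq_sym tr neq_r tr'.
Qed.

Lemma code_join_inj : injective code_join.
Proof.
move=> r r'; case: (eqVneq r r') => // neq_r /ffunP/(_ (r', r')).
by rewrite !ffunE /= eqxx eq_sym (negbTE neq_r).
Qed.

Definition decode (L : A -> A) (c : A) (v : {ffun A * A -> B}) : A :=
  if [pick a | code a == v] is Some a then a
  else if [pick r | (code_meet r == v) || (code_join r == v)] is Some r then L r else c.

Section Decode.
Variables (L : A -> A) (c : A).

Lemma decode_code a : decode L c (code a) = a.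
Proof. by rewrite /decode; case: pickP => [a' /eqP/code_inj //|/(_ a)]; rewrite eqxx. Qed.

Lemma decode_meet r : decode L c (code_meet r) = L r.
Proof.
rewrite /decode; case: pickP => [a /eqP/code_neq_meet //|_].
case: pickP => [r' /orP[/eqP/code_meet_inj -> //|/eqP/esym/meet_neq_join //]|/(_ r)].
by rewrite eqxx.
Qed.

Lemma decode_join r : decode L c (code_join r) = L r.
Proof.
rewrite /decode; case: pickP => [a /eqP/code_neq_join //|_].
case: pickP => [r' /orP[/eqP/meet_neq_join //|/eqP/code_join_inj -> //]|/(_ r)].
by rewrite eqxx orbT.
Qed.

Lemma decode_other v : (forall a, v <> code a) ->
  (forall r, v <> code_meet r /\ v <> code_join r) -> decode L c v = c.
Proof.
move=> not_code not_mj; rewrite /decode.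
case: pickP => [a /eqP va|_]; first by case: (not_code a).
case: pickP => [r /orP[] /eqP vr|//]; case: (not_mj r) => ? ?; by subst.
Qed.

End Decode.

(* The coordinatewise image of [code p] and [code q] under an idempotent binary
   operation [g] with [g 0 1 = s] and [g 1 0 = t]. *)
Definition code_mix (p q : A) (s t : B) : {ffun A * A -> B} :=
  [ffun j => if code p j == code q j then code p j else if code q j == u2 then s else t].

Lemma code_mix_cases p q : p != q ->
  [/\ code_mix p q z2 u2 = code p, code_mix p q u2 z2 = code q,
      code_mix p q z2 z2 = code_meet (third p q)
    & code_mix p q u2 u2 = code_join (third p q)].
Proof.
move: p q; apply: forall3; apply: forall3 => // _;
  by split; apply/ffunP => -[i k]; move: i k; apply: forall3; apply: forall3; rewrite !ffunE.
Qed.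

Lemma decode_mix L c p q s t : p != q ->
  decode L c (code_mix p q s t) = if s == t then L (third p q) else if s == z2 then p else q.
Proof.
move=> neq_pq; have [mix01 mix10 mix00 mix11] := code_mix_cases neq_pq.
by case: (B_cases s) => ->; case: (B_cases t) => ->;
  rewrite ?mix01 ?mix10 ?mix00 ?mix11 ?decode_code ?decode_meet ?decode_join.
Qed.

Definition vperm (s : A) (v : {ffun A * A -> B}) : {ffun A * A -> B} :=
  [ffun ij => v (tau s ij.1, tau s ij.2)].

Lemma vperm_code s a : vperm s (code a) = code (tau s a).
Proof. by apply/ffunP => -[i k]; rewrite !ffunE /= !tau_eq. Qed.

Lemma vperm_meet s r : vperm s (code_meet r) = code_meet (tau s r).
Proof. by apply/ffunP => -[i k]; rewrite !ffunE /= !tau_eq tau_inv. Qed.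

Lemma vperm_join s r : vperm s (code_join r) = code_join (tau s r).
Proof. by apply/ffunP => -[i k]; rewrite !ffunE /= !tau_eq. Qed.

Lemma vperm_inv s : involutive (vperm s).
Proof. by move=> v; apply/ffunP => -[i k]; rewrite !ffunE /= !tau_inv. Qed.

Lemma decode_vperm L c s v : (forall r, L (tau s r) = tau s (L r)) -> tau s c = c ->
  decode L c (vperm s v) = tau s (decode L c v).
Proof.
move=> L_tau c_tau.
case: (pselect (exists a, v = code a)) => [[a ->]|not_code].
  by rewrite vperm_code !decode_code.
case: (pselect (exists r, v = code_meet r \/ v = code_join r)) => [[r [->|->]]|not_mj].
- by rewrite vperm_meet !decode_meet.
- by rewrite vperm_join !decode_join.
rewrite [decode L c v]decode_other ?c_tau; last 2 first.
- by move=> a va; apply: not_code; exists a.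
- by move=> r; split=> vr; apply: not_mj; exists r; [left|right].
apply: decode_other => [a va|r].
- by apply: not_code; exists (tau s a); rewrite -vperm_code -va vperm_inv.
- split=> vr; apply: not_mj; exists (tau s r); [left|right];
  by rewrite -?vperm_meet -?vperm_join -vr vperm_inv.
Qed.

Definition ext_op (L : A -> A) (c : A) n (h : op B n) : op A n :=
  [ffun x : {ffun 'I_n -> A} => decode L c [ffun j => h [ffun i => code (x i) j]]].

Section ExtOp.
Variables (L : A -> A) (c : A).

Lemma ext_op_minor n r (sigma : 'I_n -> 'I_r) (h : op B n) :
  ext_op L c (minor sigma h) = minor sigma (ext_op L c h).
Proof.
apply/ffunP => x; rewrite !ffunE; congr decode; apply/ffunP => j; rewrite !ffunE.
by congr (h _); apply/ffunP => i; rewrite !ffunE.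
Qed.

Lemma ext_op_tau n (h : op B n) s (x : {ffun 'I_n -> A}) :
  (forall r, L (tau s r) = tau s (L r)) -> tau s c = c ->
  ext_op L c h [ffun i => tau s (x i)] = tau s (ext_op L c h x).
Proof.
move=> L_tau c_tau; rewrite !ffunE -decode_vperm //; congr decode.
apply/ffunP => -[i k]; rewrite !ffunE /=; congr (h _).
by apply/ffunP => l; rewrite !ffunE /= !tau_eq.
Qed.

Lemma ext_op_const n (h : op B n) a : idem_op h -> ext_op L c h [ffun _ => a] = a.
Proof.
move=> idem_h; rewrite ffunE -[RHS](decode_code L c); congr decode.
by apply/ffunP => j; rewrite ffunE -[RHS]idem_h; congr (h _); apply/ffunP => i; rewrite !ffunE.
Qed.

Lemma ext_op_pair n (h : op B n) p q (P : 'I_n -> bool) : idem_op h -> p != q ->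
  ext_op L c h [ffun i => if P i then q else p] =
  let s := h [ffun i => b2o (P i)] in let t := h [ffun i => b2o (~~ P i)] in
  if s == t then L (third p q) else if s == z2 then p else q.
Proof.
move=> idem_h neq_pq /=; rewrite -(decode_mix L c) // ffunE; congr decode.
apply/ffunP => j; rewrite [LHS]ffunE [RHS]ffunE.
have -> : [ffun i => code ([ffun i => if P i then q else p] i) j] =
          [ffun i => if P i then code q j else code p j].
  by apply/ffunP => i; rewrite !ffunE; case: (P i).
case: (B_cases (code p j)) => ->; case: (B_cases (code q j)) => -> /=;
  rewrite -1?[in RHS](idem_h z2) -1?[in RHS](idem_h u2);
  by congr (h _); apply/ffunP => i; rewrite !ffunE; case: (P i).
Qed.

End ExtOp.

(** * Invariant binary relations on the three-element domain *)

Definition graph (g : A -> A) : rel A := fun a b => b == g a.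
Definition mu_rel (t : A) : rel A := fun a b => (a == t) == (b == t).
Definition phi_rel : rel A := fun a b => val b == (val a).+1 %% 3.
Definition swap_rel (p q : A) : rel A :=
  fun a b => ((a == p) && (b == q)) || ((a == q) && (b == p)).

Definition bij_off (R : rel A) (r r' : A) : Prop :=
  [/\ rel_dom R =1 predC1 r, rel_codom R =1 predC1 r', rel_inj R & rel_inj (rel_conv R)].

Lemma partial_bij_cases R a1 a2 : rel_inj R -> rel_inj (rel_conv R) ->
  a1 != a2 -> rel_dom R a1 -> rel_dom R a2 ->
  (exists2 g, injective g & R =2 graph g) \/ exists r r', bij_off R r r'.
Proof.
move=> injR funR neq_a dom1 dom2.
have image_uniq a b b' : R a b -> R a b' -> b = b' by move=> Rab Rab'; apply: (funR _ _ a).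
have /andP[ta1 ta2] := third_neq neq_a.
have [domt|not_domt] := boolP (rel_dom R (third a1 a2)).
  left; pose g a := odflt a [pick b | R a b].
  have Rg a : R a (g a).
    have: rel_dom R a by case/or3P: (third_cases neq_a a) => /eqP ->.
    by rewrite /g; case/existsP=> b Rab; case: pickP => [//|/(_ b)]; rewrite Rab.
  exists g => [a a' eq_g|a b]; first by apply: (injR _ _ (g a)); rewrite // eq_g.
  by apply/idP/eqP => [Rab|->]; [apply: image_uniq Rab (Rg a) | apply: Rg].
right; have [b1 Rb1] := existsP dom1; have [b2 Rb2] := existsP dom2.
have neq_b : b1 != b2 by apply: contra_neq neq_a => eq_b; apply: (injR _ _ b1); rewrite // eq_b.
exists (third a1 a2), (third b1 b2); split=> // [a|b]; rewrite /= third_predC1 //.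
  case/or3P: (third_cases neq_a a) => /eqP->; rewrite ?dom1 ?dom2 ?eqxx ?orbT //.
  by rewrite (negbTE not_domt) (negbTE ta1) (negbTE ta2).
apply/existsP/idP => [[a Rab]|/orP[] /eqP->]; [|by exists a1|by exists a2].
case/or3P: (third_cases neq_a a) => /eqP eq_a; rewrite eq_a in Rab.
- by rewrite (image_uniq _ _ _ Rab Rb1) eqxx.
- by rewrite (image_uniq _ _ _ Rab Rb2) eqxx orbT.
- by case/negP: not_domt; apply/existsP; exists b.
Qed.

Lemma bij_off_pairs R r r' : bij_off R r r' -> exists p q bp bq,
  [/\ p != q, bp != bq, r = third p q, r' = third bp bq
    & R =2 (fun a b => ((a == p) && (b == bp)) || ((a == q) && (b == bq)))].
Proof.
case=> domR codomR injR funR.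
have [p [q [neq_pq r_pq]]] := third_onto r; have /andP[tp tq] := third_neq neq_pq.
have /existsP[bp Rp] : rel_dom R p by rewrite domR /= r_pq eq_sym.
have /existsP[bq Rq] : rel_dom R q by rewrite domR /= r_pq eq_sym.
have neq_b : bp != bq by apply: contra_neq neq_pq => eq_b; apply: (injR _ _ bp); rewrite // eq_b.
have r'_neq a b : R a b -> r' != b.
  by move=> Rab; rewrite eq_sym -[_ != _]/(predC1 _ _) -codomR; apply/existsP; exists a.
exists p, q, bp, bq; split=> //; first exact: third_uniq neq_b (r'_neq _ _ Rp) (r'_neq _ _ Rq).
move=> a b; apply/idP/idP => [Rab|/orP[] /andP[/eqP-> /eqP->] //].
have: a != third p q by rewrite -r_pq -[_ != _]/(predC1 _ _) -domR; apply/existsP; exists b.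
rewrite third_predC1 // => /orP[] /eqP eq_a; rewrite eq_a in Rab *.
- by rewrite (funR _ _ _ Rab Rp) !eqxx.
- by rewrite (funR _ _ _ Rab Rq) !eqxx orbT.
Qed.

Lemma bij_off_conv R r r' : bij_off R r r' -> bij_off (rel_conv R) r' r.
Proof. by case. Qed.

Lemma bij_off_comp R S r r' r'' : bij_off R r r' -> bij_off S r' r'' ->
  bij_off (rel_comp R S) r r''.
Proof.
case=> domR codomR injR funR [domS codomS injS funS]; split.
- move=> a; rewrite -domR; apply/existsP/existsP => [[c /existsP[b /andP[Rab _]]]|[b Rab]].
    by exists b.
  have /existsP[c Sbc] : rel_dom S b by rewrite domS -codomR; apply/existsP; exists a.
  by exists c; apply/existsP; exists b; rewrite Rab.
- move=> c; rewrite -codomS; apply/existsP/existsP => [[a /existsP[b /andP[_ Sbc]]]|[b Sbc]].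
    by exists b.
  have /existsP[a Rab] : rel_codom R b by rewrite codomR -domS; apply/existsP; exists c.
  by exists a; apply/existsP; exists b; rewrite /rel_conv in Rab Sbc *; rewrite Rab Sbc.
- move=> a a' c /existsP[b /andP[Rab Sbc]] /existsP[b' /andP[Ra'b' Sb'c]].
  by apply: (injR _ _ b); rewrite // (injS _ _ _ Sbc Sb'c).
- move=> c c' a /existsP[b /andP[Rab Sbc]] /existsP[b' /andP[Rab' Sb'c']].
  by apply: (funS _ _ b); rewrite // (funR _ _ _ Rab Rab').
Qed.

Lemma bij_off_self S r : bij_off S r r ->
  (forall a b, S a b -> a = b) \/ exists p q, p != q /\ S =2 swap_rel p q.
Proof.
case/bij_off_pairs=> p [q [bp [bq [neq_pq neq_b r_pq r_b eqS]]]].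
have /andP[tbp tbq] := third_neq neq_b.
have in_pq b : b != r -> (b == p) || (b == q) by rewrite r_pq third_predC1.
have bp_pq : (bp == p) || (bp == q) by apply: in_pq; rewrite r_b eq_sym.
have bq_pq : (bq == p) || (bq == q) by apply: in_pq; rewrite r_b eq_sym.
case/orP: bp_pq => /eqP eq_bp; case/orP: bq_pq => /eqP eq_bq;
  rewrite eq_bp eq_bq ?eqxx // in eqS neq_b.
- by left=> a b; rewrite eqS => /orP[] /andP[/eqP-> /eqP->].
- by right; exists p, q; split.
Qed.

Definition restr_graph (g : A -> A) (r : A) : rel A := fun a b => (a != r) && (b == g a).

Lemma bij_off_restr_graph g r : injective g -> bij_off (restr_graph g r) r (g r).
Proof.
move=> g_inj; split=> [a|b|a a' b|b b' a] /=.
- by apply/existsP/idP => [[b /andP[]] //|ar]; exists (g a); rewrite /restr_graph ar eqxx.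
- apply/existsP/idP => [[a /andP[ar /eqP->]]|]; first by rewrite (inj_eq g_inj).
  have [g' gK g'K] := injF_bij g_inj; rewrite -{1}[b]g'K (inj_eq g_inj) => br.
  by exists (g' b); rewrite /rel_conv /restr_graph br g'K eqxx.
- by move=> /andP[_ /eqP->] /andP[_ /eqP /g_inj].
- by move=> /andP[_ /eqP->] /andP[_ /eqP->].
Qed.

Section InvariantsOnA.
Variable C : opset A.
Arguments C : clear implicits.
Hypothesis no_mu : forall t, ~ inv_rel C (mu_rel t).
Hypothesis no_phi : ~ inv_rel C phi_rel.

(* Otherwise [K] would be [mu_rel t] for the third element [t]. *)
Lemma inv_per_total K : inv_rel C K ->
  (forall u v, K u v -> K v u) -> (forall u v w, K u v -> K v w -> K u w) ->
  forall a a', a != a' -> K a a' -> forall u v, K u u -> K v v -> K u v.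
Proof.
move=> invK symK trK a a' neq_a Kaa'.
have Ka'a := symK _ _ Kaa'; have Kaa := trK _ _ _ Kaa' Ka'a; have Ka'a' := trK _ _ _ Ka'a Kaa'.
have [t [ta ta' cover]] : exists t, [/\ t != a, t != a' & forall z, [|| z == a, z == a' | z == t]].
  have /andP[? ?] := third_neq neq_a.
  by exists (third a a'); split=> //; apply: third_cases.
have [Ktt|not_Ktt] := boolP (K t t); last first.
  move=> u v Kuu Kvv; case/or3P: (cover u) => /eqP eq_u; case/or3P: (cover v) => /eqP eq_v;
  by rewrite eq_u eq_v in Kuu Kvv *; rewrite ?(negbTE not_Ktt) in Kuu Kvv *.
have [Kta|not_Kta] := boolP (K t a).
  have Kza z : K z a by case/or3P: (cover z) => /eqP ->.
  by move=> u v _ _; apply: trK (Kza u) (symK _ _ (Kza v)).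
have not_Kta' : ~~ K t a' by apply: contra not_Kta => Kta'; apply: trK Kta' Ka'a.
have not_Kat : ~~ K a t by apply: contra not_Kta; apply: symK.
have not_Ka't : ~~ K a' t by apply: contra not_Kta'; apply: symK.
case: (no_mu (t := t)); apply: inv_rel_ext invK _ => u v; rewrite /mu_rel.
case/or3P: (cover u) => /eqP->; case/or3P: (cover v) => /eqP->;
  rewrite ?eqxx ?(eq_sym a t) ?(eq_sym a' t) ?(negbTE ta) ?(negbTE ta') //=;
  by rewrite ?(negbTE not_Kta) ?(negbTE not_Kta') ?(negbTE not_Kat) ?(negbTE not_Ka't).
Qed.

(* The link relation of [R] is an invariant partial equivalence relating [a] and
   [a'], hence total on the domain of [R]. *)
Lemma inv_rel_not_linked_inj R : inv_rel C R -> rectangular R -> ~ left_linked R ->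
  rel_inj R.
Proof.
move=> invR rectR not_linked a a' b Rab Ra'b; case: (eqVneq a a') => // neq_a.
case: not_linked => u v dom_u dom_v.
have link_aa' : rel_link R a a' by apply/existsP; exists b; rewrite /rel_conv Rab Ra'b.
apply: (inv_per_total (inv_rel_comp invR (inv_rel_conv invR)) (@rel_link_sym _ R)
          (rel_link_trans rectR) neq_a link_aa'); exact: rel_link_refl.
Qed.

Lemma inv_graph_perm g : injective g -> inv_rel C (graph g) ->
  g =1 id \/ exists s, g =1 tau s.
Proof.
move=> g_inj inv_g; case: (perm3_cases g_inj) => [?|?|g_cyc|g_cyc2]; [by left|by right| |].
- by case: no_phi; apply: inv_rel_ext inv_g _ => u v; rewrite /graph g_cyc;
    move: u v; apply: forall3; apply: forall3.
- by case: no_phi; apply: inv_rel_ext (inv_rel_conv inv_g) _ => u v;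
    rewrite /rel_conv /graph g_cyc2; move: u v; apply: forall3; apply: forall3.
Qed.

End InvariantsOnA.

Definition self_dual n (h : op B n) : Prop :=
  forall P : 'I_n -> bool, h [ffun i => b2o (P i)] != h [ffun i => b2o (~~ P i)].

(* [L r] is the value of [ext_op] on tuples over the two elements other than
   [r] on which [h] acts as a meet or a join. *)
Definition compatible (C : opset A) (L : A -> A) : Prop :=
  (forall r, inv_pred C (predC1 r) -> L r != r) /\
  (forall R r r', inv_rel C R -> bij_off R r r' -> R (L r) (L r')).

Lemma idem_op_arity n (h : op B n) : idem_op h -> 0 < n.
Proof.
case: n h => // h idem_h; have := idem_h u2.
by rewrite (_ : [ffun _ => u2] = [ffun _ => z2]) ?idem_h //; apply/ffunP => -[].
Qed.

Lemma two_valued_tuple n (x : {ffun 'I_n -> A}) p q :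
  (forall i, (x i == p) || (x i == q)) -> x = [ffun i => if x i == q then q else p].
Proof.
move=> x_pq; apply/ffunP => i; rewrite ffunE.
by case/orP: (x_pq i) => /eqP->; rewrite ?eqxx //; case: eqP.
Qed.

Section ExtOpInClone.
Variable C : opset A.
Arguments C : clear implicits.
Hypothesis cloneC : is_clone C.
Variables d m : op A 3.
Hypothesis Cd : C 3 d.
Hypothesis malcev_d : forall x y : A, d (tri y x x) = y /\ d (tri x x y) = y.
Hypothesis Cm : C 3 m.
Hypothesis majority_m : forall x y : A,
  [/\ m (tri x y y) = y, m (tri y x y) = y & m (tri y y x) = y].
Hypothesis no_mu : forall t, ~ inv_rel C (mu_rel t).
Hypothesis no_phi : ~ inv_rel C phi_rel.
Variables (L : A -> A) (c : A).
Hypothesis L_tau : forall s, inv_rel C (graph (tau s)) -> forall r, L (tau s r) = tau s (L r).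
Hypothesis c_tau : forall s, inv_rel C (graph (tau s)) -> tau s c = c.
Variables (n : nat) (h : op B n).
Hypothesis idem_h : idem_op h.
Hypothesis self_dual_or_compatible : self_dual h \/ compatible C L.

Lemma ext_op_pair_cases p q (P : 'I_n -> bool) : p != q ->
  let x := [ffun i => if P i then q else p] in
  [\/ ext_op L c h x = p, ext_op L c h x = q | compatible C L /\ ext_op L c h x = L (third p q)].
Proof.
move=> neq_pq /=; rewrite ext_op_pair //=; case: eqP => [eq_st|_].
  by constructor 3; case: self_dual_or_compatible => // /(_ P); rewrite eq_st eqxx.
by case: eqP; [constructor 1|constructor 2].
Qed.

Lemma ext_op_inv_pred U : inv_pred C U -> pres_pred (ext_op L c h) U.
Proof.
move=> invU x Ux; have i0 : 'I_n := Ordinal (idem_op_arity idem_h).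
have [/forallP x_const|/forallPn[j]] := boolP [forall i, x i == x i0].
  have -> : x = [ffun _ => x i0] by apply/ffunP => i; rewrite ffunE; apply/eqP.
  by rewrite ext_op_const //; apply: Ux.
rewrite eq_sym; move: (Ux i0) (Ux j); move: (x i0) (x j) => p q Up Uq neq_pq.
have [Ut|not_Ut] := boolP (U (third p q)).
  by case/or3P: (third_cases neq_pq (ext_op L c h x)) => /eqP->.
have /andP[tp tq] := third_neq neq_pq.
have eqU : U =1 predC1 (third p q).
  move=> z /=; rewrite third_predC1 //.
  case/or3P: (third_cases neq_pq z) => /eqP->; rewrite ?Up ?Uq ?eqxx ?orbT //.
  by rewrite (negbTE not_Ut) (negbTE tp) (negbTE tq).
have x_pq i : (x i == p) || (x i == q) by rewrite -third_predC1 //; have := Ux i; rewrite eqU.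
rewrite (two_valued_tuple x_pq).
have [->|->|[compat ->]] := ext_op_pair_cases (fun i => x i == q) neq_pq; rewrite // eqU.
exact: compat.1 (inv_pred_ext invU eqU).
Qed.

Lemma ext_op_linked R : inv_rel C R -> left_linked R -> pres_rel (ext_op L c h) R.
Proof.
move=> invR linkedR x y xy.
have dom_x : rel_dom R (ext_op L c h x).
  by apply: (ext_op_inv_pred (inv_pred_dom invR)) => i; apply/existsP; exists (y i); apply: xy.
have /existsP[a Ray] : rel_codom R (ext_op L c h y).
  by apply: (ext_op_inv_pred (inv_pred_codom invR)) => i; apply/existsP; exists (x i); apply: xy.
have dom_a : rel_dom R a by apply/existsP; exists (ext_op L c h y).
have [b /andP[Rxb Rab]] := existsP (linkedR _ _ dom_x dom_a).
rewrite /rel_conv in Rab Ray; exact: (inv_rel_rect Cd malcev_d invR Rxb Rab Ray).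
Qed.

Lemma ext_op_graph g : injective g -> inv_rel C (graph g) -> pres_rel (ext_op L c h) (graph g).
Proof.
move=> g_inj inv_g x y xy.
have -> : y = [ffun i => g (x i)] by apply/ffunP => i; rewrite ffunE; apply/eqP; apply: xy.
rewrite /graph; case: (inv_graph_perm no_phi g_inj inv_g) => [g_id|[s g_tau]].
  by rewrite (_ : [ffun i => g (x i)] = x) ?g_id //; apply/ffunP => i; rewrite ffunE g_id.
have inv_tau : inv_rel C (graph (tau s)).
  by apply: inv_rel_ext inv_g _ => a b; rewrite /graph g_tau.
rewrite (_ : [ffun i => g (x i)] = [ffun i => tau s (x i)]); last first.
  by apply/ffunP => i; rewrite !ffunE g_tau.
by rewrite g_tau ext_op_tau ?eqxx //; [exact: L_tau | exact: c_tau].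
Qed.

Lemma ext_op_bij_off R r r' : inv_rel C R -> bij_off R r r' -> pres_rel (ext_op L c h) R.
Proof.
move=> invR bijR x y xy.
have [p [q [bp [bq [neq_pq neq_b r_pq r'_b eqR]]]]] := bij_off_pairs bijR.
have x_pq i : (x i == p) || (x i == q).
  by move: (xy i); rewrite eqR => /orP[] /andP[-> _]; rewrite ?orbT.
have -> : y = [ffun i => if x i == q then bq else bp].
  apply/ffunP => i; rewrite ffunE; move: (xy i); rewrite eqR.
  by case/orP=> /andP[/eqP-> /eqP->]; rewrite ?eqxx ?(negbTE neq_pq).
rewrite {1}(two_valued_tuple x_pq) !ext_op_pair //=; case: eqP => [eq_st|_].
  have [_ compatR] : compatible C L.
    by case: self_dual_or_compatible => // /(_ (fun i => x i == q)); rewrite eq_st eqxx.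
  by rewrite -r_pq -r'_b; apply: compatR invR bijR.
by case: eqP; rewrite eqR !eqxx ?orbT.
Qed.

Theorem ext_op_inv_rel R : inv_rel C R -> pres_rel (ext_op L c h) R.
Proof.
move=> invR; have rectR := inv_rel_rect Cd malcev_d invR.
have [linked|not_linked] := pselect (left_linked R); first exact: ext_op_linked.
have [linked'|not_linked'] := pselect (left_linked (rel_conv R)).
  by move=> x y xy; apply: (ext_op_linked (inv_rel_conv invR) linked') => i; apply: xy.
have injR := inv_rel_not_linked_inj no_mu invR rectR not_linked.
have funR := inv_rel_not_linked_inj no_mu (inv_rel_conv invR)
  (inv_rel_rect Cd malcev_d (inv_rel_conv invR)) not_linked'.
have [a1 [a2 [neq_a dom1 dom2]]] := not_left_linked not_linked.
case: (partial_bij_cases injR funR neq_a dom1 dom2) => [[g g_inj eqR]|[r [r' bijR]]].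
  move=> x y xy; rewrite eqR; apply: ext_op_graph (inv_rel_ext invR eqR) _ _ _ => // i.
  by rewrite -eqR.
exact: ext_op_bij_off bijR.
Qed.

Lemma ext_op_in_clone : C n (ext_op L c h).
Proof. by apply: (baker_pixley cloneC Cm majority_m) => R /ext_op_inv_rel. Qed.

End ExtOpInClone.

(** * Choosing [L] when no swap is invariant *)

Section ChoiceOfL.
Variable C : opset A.
Arguments C : clear implicits.
Hypothesis no_phi : ~ inv_rel C phi_rel.

Lemma inv_graph_id : inv_rel C (graph id).
Proof. by move=> n f Cf x y xy; rewrite /graph (_ : y = x) //; apply/ffunP => i; apply/eqP/xy. Qed.

Lemma inv_restr_graph g r : inv_rel C (graph g) -> inv_pred C (predC1 r) ->
  inv_rel C (restr_graph g r).
Proof.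
move=> inv_g inv_r; apply: inv_rel_ext (inv_rel_comp (inv_rel_diag inv_r) inv_g) _ => a b.
apply/existsP/andP => [[a' /andP[/andP[/eqP<- ar] bg]] //|[ar bg]].
by exists a; rewrite /= eqxx ar.
Qed.

Lemma inv_tau_uniq s s' : inv_rel C (graph (tau s)) -> inv_rel C (graph (tau s')) -> s = s'.
Proof.
move=> inv_s inv_s'; apply/eqP/negP => /negP neq_s.
have inv_comp : inv_rel C (graph (tau s' \o tau s)).
  apply: inv_rel_ext (inv_rel_comp inv_s inv_s') _ => a c.
  by apply/existsP/eqP => [[b /andP[/eqP-> /eqP->]] //|->]; exists (tau s a); rewrite /graph !eqxx.
have comp_inj : injective (tau s' \o tau s) by apply: inj_comp; apply: tau_inj.
case: (inv_graph_perm no_phi comp_inj inv_comp) => [comp_id|[t comp_t]].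
  by have /= fix_s := comp_id s; have := tau_comp_no_fixpoint s neq_s; rewrite fix_s eqxx.
have /= fix_t := comp_t t; have := tau_comp_no_fixpoint t neq_s.
by rewrite fix_t tau_id eqxx.
Qed.

Definition tau_center : A := odflt o0 [pick s | `[< inv_rel C (graph (tau s)) >]].

Lemma tau_center_fixed s : inv_rel C (graph (tau s)) -> tau s tau_center = tau_center.
Proof.
move=> inv_s; rewrite /tau_center; case: pickP => [s' /asboolP inv_s'|/(_ s)].
  by rewrite (inv_tau_uniq inv_s inv_s') tau_id.
by rewrite asboolT.
Qed.

Hypothesis no_swap : forall p q, p != q -> ~ inv_rel C (swap_rel p q).

Lemma inv_pred_bij_off R r r' : inv_rel C R -> bij_off R r r' ->
  inv_pred C (predC1 r) /\ inv_pred C (predC1 r').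
Proof.
move=> invR [domR codomR _ _].
split; first exact: inv_pred_ext (inv_pred_dom invR) domR.
exact: inv_pred_ext (inv_pred_codom invR) codomR.
Qed.

(* [R'] followed by the converse of [R] is an invariant bijection of [A] minus
   [r] onto itself, hence the identity or a swap. *)
Lemma inv_bij_off_sub R R' r r' : inv_rel C R -> inv_rel C R' ->
  bij_off R r r' -> bij_off R' r r' -> forall a b, R' a b -> R a b.
Proof.
move=> invR invR' bijR bijR' a b R'ab.
have invS := inv_rel_comp invR' (inv_rel_conv invR).
case: (bij_off_self (bij_off_comp bijR' (bij_off_conv bijR))) => [S_id|[p [q [neq_pq eqS]]]].
  have [_ codomR _ _] := bijR; have [_ codomR' _ _] := bijR'.
  have /existsP[a' Ra'b] : rel_codom R b by rewrite codomR -codomR'; apply/existsP; exists a.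
  by rewrite (S_id a a') //; apply/existsP; exists b; rewrite R'ab.
by case: (no_swap neq_pq); apply: inv_rel_ext invS eqS.
Qed.

Definition iso_off (r r' : A) : Prop := exists R, inv_rel C R /\ bij_off R r r'.

Lemma iso_off_refl r : inv_pred C (predC1 r) -> iso_off r r.
Proof.
move=> inv_r; exists (restr_graph id r).
by split; [apply: inv_restr_graph inv_graph_id inv_r | apply: bij_off_restr_graph].
Qed.

Lemma iso_off_sym r r' : iso_off r r' -> iso_off r' r.
Proof.
case=> R [invR bijR]; exists (rel_conv R).
by split; [apply: inv_rel_conv | apply: bij_off_conv].
Qed.

Lemma iso_off_trans r r' r'' : iso_off r r' -> iso_off r' r'' -> iso_off r r''.
Proof.
case=> R [invR bijR] [S [invS bijS]]; exists (rel_comp R S).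
by split; [apply: inv_rel_comp | apply: bij_off_comp bijR bijS].
Qed.

Definition iso_base (r : A) : A := odflt r [pick s | `[< iso_off s r >]].

Lemma iso_base_iso r : inv_pred C (predC1 r) -> iso_off (iso_base r) r.
Proof.
move=> inv_r; rewrite /iso_base; case: pickP => [s /asboolP //|/(_ r)].
by rewrite asboolT //; apply: iso_off_refl.
Qed.

Lemma iso_base_eq r r' : iso_off r r' -> iso_base r = iso_base r'.
Proof.
move=> iso_rr'; rewrite /iso_base.
have eq_iso : (fun s => `[< iso_off s r >]) =1 (fun s => `[< iso_off s r' >]).
  move=> s; apply/asboolP/asboolP => iso_s; first exact: iso_off_trans iso_s iso_rr'.
  exact: iso_off_trans iso_s (iso_off_sym iso_rr').
rewrite (eq_pick eq_iso); case: pickP => [//|/(_ r)].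
by rewrite asboolT.
Qed.

(* [choice_L r] transports [other (iso_base r)] along an invariant bijection onto
   [A] minus [r]; by [inv_bij_off_sub] the result does not depend on the choice. *)
Definition choice_L (r : A) : A :=
  odflt tau_center [pick b | `[< exists R,
    [/\ inv_rel C R, bij_off R (iso_base r) r & R (other (iso_base r)) b] >]].

Lemma choice_L_spec r : inv_pred C (predC1 r) -> exists R,
  [/\ inv_rel C R, bij_off R (iso_base r) r & R (other (iso_base r)) (choice_L r)].
Proof.
move=> inv_r; have [R [invR bijR]] := iso_base_iso inv_r.
rewrite /choice_L; case: pickP => [b /asboolP //|no_b]; have [domR _ _ _] := bijR.
have /existsP[b Rb] : rel_dom R (other (iso_base r)) by rewrite domR /= other_neq.
by have := no_b b; rewrite asboolT //; exists R.
Qed.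

Lemma choice_L_default r : ~ inv_pred C (predC1 r) -> choice_L r = tau_center.
Proof.
move=> not_inv; rewrite /choice_L; case: pickP => [b /asboolP[R [invR bijR _]]|//].
by case: not_inv; apply: (inv_pred_bij_off invR bijR).2.
Qed.

Lemma choice_L_compatible : compatible C choice_L.
Proof.
split=> [r inv_r|R r r' invR bijR].
  have [R [_ [_ codomR _ _] RL]] := choice_L_spec inv_r.
  by rewrite -[_ != _]/(predC1 r _) -codomR; apply/existsP; exists (other (iso_base r)).
have [inv_r inv_r'] := inv_pred_bij_off invR bijR.
have [R1 [inv1 bij1 R1L]] := choice_L_spec inv_r.
have [R2 [inv2 bij2 R2L]] := choice_L_spec inv_r'.
have base_eq : iso_base r = iso_base r' by apply: iso_base_eq; exists R.
rewrite -base_eq in bij2 R2L.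
have /existsP[m /andP[R1m Rm]] :=
  inv_bij_off_sub (inv_rel_comp inv1 invR) inv2 (bij_off_comp bij1 bijR) bij2 R2L.
by have [_ _ _ fun1] := bij1; rewrite (fun1 _ _ _ R1L R1m).
Qed.

Lemma choice_L_tau s : inv_rel C (graph (tau s)) ->
  forall r, choice_L (tau s r) = tau s (choice_L r).
Proof.
move=> inv_s r; have bij_s := bij_off_restr_graph _ (@tau_inj s).
have [inv_r|not_inv_r] := pselect (inv_pred C (predC1 r)).
  have := choice_L_compatible.2 _ _ _ (inv_restr_graph inv_s inv_r) (bij_s r).
  by case/andP=> _ /eqP.
have not_inv_sr : ~ inv_pred C (predC1 (tau s r)).
  move=> inv_sr; apply: not_inv_r; rewrite -[r](tau_inv s).
  exact: (inv_pred_bij_off (inv_restr_graph inv_s inv_sr) (bij_s _)).2.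
by rewrite !choice_L_default // tau_center_fixed.
Qed.

End ChoiceOfL.

(** * Minion homomorphisms *)

Definition restr_op (p q : A) n (f : op A n) : op B n :=
  [ffun b : {ffun 'I_n -> B} => b2o (f [ffun i => if b i == z2 then p else q] == q)].

Lemma restr_op_minor p q n r (sigma : 'I_n -> 'I_r) (f : op A n) :
  restr_op p q (minor sigma f) = minor sigma (restr_op p q f).
Proof.
apply/ffunP => b; rewrite !ffunE; congr (b2o (f _ == q)).
by apply/ffunP => i; rewrite !ffunE.
Qed.

Lemma restr_op_I2 (C : opset A) p q n (f : op A n) : idempotent_clone C -> p != q -> C n f ->
  I2 (restr_op p q f).
Proof.
move=> idemC neq_pq Cf; split; [|split=> //] => r r_c; rewrite /const2 /rel1 !ffunE.
- have -> : [ffun i => if [ffun j => r j ord0] i == z2 then p else q] = [ffun _ => p].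
    by apply/ffunP => i; rewrite !ffunE (_ : r i ord0 = z2) //; apply/val_inj/eqP/r_c.
  by rewrite (idemC _ _ Cf) (negbTE neq_pq).
- have -> : [ffun i => if [ffun j => r j ord0] i == z2 then p else q] = [ffun _ => q].
    by apply/ffunP => i; rewrite !ffunE (_ : r i ord0 = u2) //; apply/val_inj/eqP/r_c.
  by rewrite (idemC _ _ Cf) eqxx.
Qed.

Lemma restr_op_C2 (C : opset A) p q n (f : op A n) : idempotent_clone C -> p != q ->
  inv_rel C (swap_rel p q) -> C n f -> C2 (restr_op p q f).
Proof.
move=> idemC neq_pq inv_swap Cf; split; last exact: (restr_op_I2 idemC neq_pq Cf).
move=> r r_neq; rewrite /neq2 /rel2 !ffunE.
have swap_xy : swap_rel p q (f [ffun i => if [ffun j => r j ord0] i == z2 then p else q])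
                            (f [ffun i => if [ffun j => r j ord_max] i == z2 then p else q]).
  apply: (inv_swap _ _ Cf) => i; have := r_neq i; rewrite /neq2 /rel2 !ffunE.
  case: (B_cases (r i ord0)) => ->; case: (B_cases (r i ord_max)) => -> //= _.
  - by rewrite /swap_rel !eqxx.
  - by rewrite /swap_rel !eqxx orbT.
by case/orP: swap_xy => /andP[/eqP-> /eqP->]; rewrite eqxx (negbTE neq_pq).
Qed.

Lemma I2_idem n (h : op B n) : I2 h -> idem_op h.
Proof.
have const_val (c : nat) (b : B) : val b = c -> preserves h (const2 c) -> h [ffun _ => b] = b.
  move=> bc pres_c; have pres_b : 'I_n -> const2 c [ffun _ : 'I_1 => b].
    by move=> _; rewrite /const2 /rel1 ffunE bc.
  have := pres_c _ pres_b; rewrite /const2 /rel1 !ffunE => /eqP hc.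
  by apply: val_inj; rewrite hc bc.
case=> I0 [I1 _] b.
by case: (B_cases b) => ->; [apply: (const_val 0) I0 | apply: (const_val 1) I1].
Qed.

Lemma C2_self_dual n (h : op B n) : C2 h -> self_dual h.
Proof.
case=> h_neq _ P; pose r i := [ffun l : 'I_2 => if l == ord0 then b2o (P i) else b2o (~~ P i)].
have r0 : [ffun i => r i ord0] = [ffun i => b2o (P i)] by apply/ffunP => i; rewrite !ffunE.
have r1 : [ffun i => r i ord_max] = [ffun i => b2o (~~ P i)] by apply/ffunP => i; rewrite !ffunE.
have := h_neq r; rewrite /neq2 /rel2 !ffunE r0 r1; apply=> i.
by rewrite /neq2 /rel2 !ffunE /=; case: (P i).
Qed.

Lemma minion_hom_restr_op (C : opset A) (D : opset B) p q :
  (forall n f, C n f -> D n (restr_op p q f)) -> minion_hom C D (fun n f => restr_op p q f).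
Proof. by move=> CD; split=> [|n r sigma f _]; [apply: CD | apply: restr_op_minor]. Qed.

Lemma minion_hom_ext_op (D : opset B) (C : opset A) L c :
  (forall n h, D n h -> C n (ext_op L c h)) -> minion_hom D C (fun n h => ext_op L c h).
Proof. by move=> DC; split=> [|n r sigma h _]; [apply: DC | apply: ext_op_minor]. Qed.

Theorem lemma6p2 (C : opset 'I_3) :
  is_clone C -> idempotent_clone C -> has_malcev C -> has_majority C ->
  ~ clone_preserves C (mu 0) -> ~ clone_preserves C (mu 1) ->
  ~ clone_preserves C (mu 2) -> ~ clone_preserves C phi ->
  minion_equiv C C2 \/ minion_equiv C I2.
Proof.
move=> cloneC idemC [d [Cd malcev_d]] [m [Cm majority_m]] not_mu0 not_mu1 not_mu2 not_phi.
have no_mu t : ~ inv_rel C (mu_rel t).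
  move: t; apply: forall3 => /inv_rel_clone_preserves;
    [apply: not_mu0 | apply: not_mu1 | apply: not_mu2].
have no_phi : ~ inv_rel C phi_rel by move/inv_rel_clone_preserves.
have ext_in_C := ext_op_in_clone cloneC Cd malcev_d Cm majority_m no_mu no_phi.
have [[p [q [neq_pq inv_swap]]]|no_swap] :=
  pselect (exists p q, p != q /\ inv_rel C (swap_rel p q)).
- left; split; eexists.
    by apply: minion_hom_restr_op => n f Cf; apply: (restr_op_C2 idemC neq_pq inv_swap Cf).
  apply: (@minion_hom_ext_op _ _ (fun _ => tau_center C) (tau_center C)) => n h C2h.
  apply: ext_in_C => [s inv_s r|s inv_s||]; rewrite ?tau_center_fixed //.
  + by case: C2h => _ /I2_idem.
  + by left; apply: C2_self_dual.
- have {}no_swap p q : p != q -> ~ inv_rel C (swap_rel p q).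
    by move=> neq_pq inv_swap; apply: no_swap; exists p, q.
  right; split; eexists.
    by apply: (@minion_hom_restr_op _ _ o0 o1) => n f Cf; apply: restr_op_I2 idemC _ Cf.
  apply: (@minion_hom_ext_op _ _ (choice_L C) (tau_center C)) => n h I2h.
  apply: ext_in_C => [s inv_s r|s inv_s||]; rewrite ?choice_L_tau ?tau_center_fixed //.
  + exact: I2_idem.
  + by right; apply: choice_L_compatible.
Qed.
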